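(* Let $G$ be a graph and $H$ a subgraph of $G$. If $G\in$ CBU then $H\in$ CBU. More precisely, if $K_{a,b}$ is a complete bipartite graph with $V(K_{a,b})\subseteq V(G)$, and $H$ is the graph on $V(G)$ with $E(H)=E(G)\setminus E(K_{a,b})$, then if $G$ belongs to $d$-CBU, $H$ belongs to $(d+1)$-CBU.
   Context: Let $e_1,\ldots,e_d$ be the standard basis of $\mathbb{R}^d$. For $d\ge 1$, a graph belongs to $d$-CBU if one can assign to each vertex an axis-parallel box (product of $d$ closed intervals of positive length) in $\mathbb{R}^d$ such that the boxes have pairwise disjoint interiors, two distinct vertices are adjacent iff their boxes intersect, and any two intersecting boxes intersect in a $(d-1)$-dimensional box orthogonal to $e_1$. CBU is the union of the classes $d$-CBU over all $d\ge1$. *)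

From mathcomp Require Import all_boot.
From Stdlib Require Import Reals.
Set Implicit Arguments. Unset Strict Implicit. Unset Printing Implicit Defensive.

(* A point of R^d is a function 'I_d -> R; coordinate i with val i = 0
   is the coordinate along e_1. *)
Definition point (d : nat) := 'I_d -> R.

Definition box (d : nat) (l u : point d) : point d -> Prop :=
  fun x => forall i, (l i <= x i <= u i)%R.

Definition box_interior (d : nat) (l u : point d) : point d -> Prop :=
  fun x => forall i, (l i < x i < u i)%R.

Definition orth_e1_box (d : nat) (c : R) (l' u' : point d) : point d -> Prop :=
  fun x => (forall i : 'I_d, val i = 0%N -> x i = c) /\
           (forall i : 'I_d, val i <> 0%N -> (l' i <= x i <= u' i)%R).

Definition dCBU (T : finType) (e : rel T) (d : nat) : Prop :=
  (1 <= d)%N /\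
  exists l u : T -> point d,
    (forall v i, (l v i < u v i)%R) /\
    (forall v w, v <> w -> forall x,
        ~ (box_interior (l v) (u v) x /\ box_interior (l w) (u w) x)) /\
    (forall v w, v <> w ->
        (e v w <-> exists x, box (l v) (u v) x /\ box (l w) (u w) x)) /\
    (forall v w, v <> w ->
        (exists x, box (l v) (u v) x /\ box (l w) (u w) x) ->
        exists (c : R) (l' u' : point d),
          (forall i : 'I_d, val i <> 0%N -> (l' i < u' i)%R) /\
          (forall x, (box (l v) (u v) x /\ box (l w) (u w) x) <->
                     orth_e1_box c l' u' x)).

Definition CBU (T : finType) (e : rel T) : Prop := exists d, dCBU e d.

Definition simple_graph (T : finType) (e : rel T) : Prop :=
  symmetric e /\ irreflexive e.

Definition remove_biclique (T : finType) (e : rel T) (A B : {set T}) : rel T :=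
  fun x y => e x y && ~~ (((x \in A) && (y \in B)) || ((x \in B) && (y \in A))).

From mathcomp Require Import all_boot.
From Stdlib Require Import Reals Lra.
Set Implicit Arguments. Unset Strict Implicit. Unset Printing Implicit Defensive.

(* Keep the d-dimensional representation of G in the first coordinates and append
   coordinates in which every vertex gets one of the intervals [0,1], [2,3] or
   [0,3].  Two vertices given [0,1] and [2,3] in some appended coordinate become
   non-adjacent; any other two boxes meet in every appended coordinate in an
   interval of positive length, so a contact stays a (d-1)-box orthogonal to e_1
   (extended by positive-length intervals), and interiors stay disjoint because
   they already are in the first d coordinates.  Removing the edges of K_{A,B}
   takes one coordinate, with A on [0,1] and B on [2,3]; passing to a subgraph H
   takes one coordinate for each non-adjacent pair (p, q) of H, with p on [0,1]
   and q on [2,3]. *)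

Section CatPoint.
Variables m n : nat.

Definition cat_point (x : point m) (y : point n) : point (m + n) :=
  fun i => match fintype.split i with inl j => x j | inr j => y j end.

Lemma cat_point_lshift x y j : cat_point x y (lshift n j) = x j.
Proof. by rewrite /cat_point (unsplitK (inl j)). Qed.

Lemma cat_point_rshift x y j : cat_point x y (rshift m j) = y j.
Proof. by rewrite /cat_point (unsplitK (inr j)). Qed.

Lemma forall_split_ord (P : 'I_(m + n) -> Prop) :
  (forall i, P i) <-> (forall j, P (lshift n j)) /\ (forall j, P (rshift m j)).
Proof. by split=> [H | [Hl Hr] i]; last case: (split_ordP i) => j ->. Qed.

Lemma box_cat_point l1 u1 l2 u2 x :
  box (cat_point l1 l2) (cat_point u1 u2) x <->
  box l1 u1 (fun j => x (lshift n j)) /\ box l2 u2 (fun j => x (rshift m j)).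
Proof.
split=> [/forall_split_ord [Hl Hr] | [Hl Hr]]; last apply/forall_split_ord.
  split=> j; first by have := Hl j; rewrite !cat_point_lshift.
  by have := Hr j; rewrite !cat_point_rshift.
by split=> j; rewrite ?cat_point_lshift ?cat_point_rshift; [apply: Hl | apply: Hr].
Qed.

Lemma box_interior_cat_pointl l1 u1 l2 u2 x :
  box_interior (cat_point l1 l2) (cat_point u1 u2) x ->
  box_interior l1 u1 (fun j => x (lshift n j)).
Proof. by move=> H j; have := H (lshift n j); rewrite !cat_point_lshift. Qed.

Hypothesis m_gt0 : (0 < m)%N.

Lemma orth_e1_box_cat_point c l1 u1 l2 u2 x :
  orth_e1_box c (cat_point l1 l2) (cat_point u1 u2) x <->
  orth_e1_box c l1 u1 (fun j => x (lshift n j)) /\ box l2 u2 (fun j => x (rshift m j)).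
Proof.
have rshift_neq0 (j : 'I_n) : val (rshift m j) <> 0%N.
  by move=> /= /eqP; rewrite addn_eq0 eqn0Ngt m_gt0.
split=> [[H0 H1] | [[H0 H1] H2]].
  split; first split=> j; first exact: H0 (lshift n j).
    by have := H1 (lshift n j); rewrite !cat_point_lshift; apply.
  by move=> j; have := H1 _ (rshift_neq0 j); rewrite !cat_point_rshift.
split=> i; case: (split_ordP i) => j -> Hi; rewrite ?cat_point_lshift ?cat_point_rshift.
- exact: H0.
- by case: (rshift_neq0 j).
- exact: H1.
- exact: H2.
Qed.

End CatPoint.

Definition side_lo (s : option bool) : R := if s is Some false then 2 else 0.
Definition side_hi (s : option bool) : R := if s is Some true then 1 else 3.
Definition opposite_sides (s t : option bool) : bool :=
  if s is Some b then t == Some (~~ b) else false.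

Lemma side_lo_lt_hi s : (side_lo s < side_hi s)%R.
Proof. by case: s => [[]|] /=; lra. Qed.

Lemma interval_meet (a b a' b' t : R) :
  (a <= t <= b /\ a' <= t <= b')%R <-> (Rmax a a' <= t <= Rmin b b')%R.
Proof. by rewrite /Rmax /Rmin; case: Rle_dec; case: Rle_dec; lra. Qed.

Lemma sides_meet_lt s t :
  ~~ opposite_sides s t ->
  (Rmax (side_lo s) (side_lo t) < Rmin (side_hi s) (side_hi t))%R.
Proof.
by rewrite /Rmax /Rmin; case: s => [[]|]; case: t => [[]|] //= _;
  case: Rle_dec; case: Rle_dec; lra.
Qed.

Lemma sides_meet_not_opposite s t (x : R) :
  (side_lo s <= x <= side_hi s)%R -> (side_lo t <= x <= side_hi t)%R ->
  ~~ opposite_sides s t.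
Proof. by case: s => [[]|]; case: t => [[]|] //=; lra. Qed.

Section AddSides.
Variables (T U : finType) (e : rel T) (eH : rel U) (f : U -> T) (d k : nat).
Variable side : U -> 'I_k -> option bool.
Variables l u : T -> point d.

Hypothesis f_inj : injective f.
Hypothesis d_gt0 : (0 < d)%N.
Hypothesis lt_lu : forall v i, (l v i < u v i)%R.
Hypothesis interior_disj : forall v w, v <> w -> forall x,
  ~ (box_interior (l v) (u v) x /\ box_interior (l w) (u w) x).
Hypothesis adj_meet : forall v w, v <> w ->
  (e v w <-> exists x, box (l v) (u v) x /\ box (l w) (u w) x).
Hypothesis meet_orth : forall v w, v <> w ->
  (exists x, box (l v) (u v) x /\ box (l w) (u w) x) ->
  exists (c : R) (l' u' : point d),
    (forall i : 'I_d, val i <> 0%N -> (l' i < u' i)%R) /\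
    (forall x, (box (l v) (u v) x /\ box (l w) (u w) x) <-> orth_e1_box c l' u' x).
Hypothesis adj_sides : forall v w, v <> w ->
  (eH v w <-> e (f v) (f w) /\ forall j, ~~ opposite_sides (side v j) (side w j)).

Definition lo_sides v : point (d + k) :=
  cat_point (l (f v)) (fun j => side_lo (side v j)).
Definition hi_sides v : point (d + k) :=
  cat_point (u (f v)) (fun j => side_hi (side v j)).

Lemma meet_sides v w x :
  box (lo_sides v) (hi_sides v) x /\ box (lo_sides w) (hi_sides w) x <->
  (box (l (f v)) (u (f v)) (fun j => x (lshift k j)) /\
   box (l (f w)) (u (f w)) (fun j => x (lshift k j))) /\
  box (fun j => Rmax (side_lo (side v j)) (side_lo (side w j)))
      (fun j => Rmin (side_hi (side v j)) (side_hi (side w j)))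
      (fun j => x (rshift d j)).
Proof.
rewrite /lo_sides /hi_sides; split.
  case=> /box_cat_point [Hv Sv] /box_cat_point [Hw Sw].
  by split=> // j; apply/interval_meet; split; [apply: Sv | apply: Sw].
case=> [[Hv Hw] S]; split; apply/box_cat_point; split=> // j.
  by have /interval_meet [] := S j.
by have /interval_meet [] := S j.
Qed.

Lemma meet_sides_not_opposite v w x :
  box (lo_sides v) (hi_sides v) x /\ box (lo_sides w) (hi_sides w) x ->
  forall j, ~~ opposite_sides (side v j) (side w j).
Proof.
move=> /meet_sides [_ S] j; have /interval_meet [] := S j.
exact: sides_meet_not_opposite.
Qed.

Lemma lo_sides_lt_hi v i : (lo_sides v i < hi_sides v i)%R.
Proof.
rewrite /lo_sides /hi_sides; case: (split_ordP i) => j ->.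
  by rewrite !cat_point_lshift; apply: lt_lu.
by rewrite !cat_point_rshift; apply: side_lo_lt_hi.
Qed.

Lemma interior_sides_disj v w : v <> w -> forall x,
  ~ (box_interior (lo_sides v) (hi_sides v) x /\
     box_interior (lo_sides w) (hi_sides w) x).
Proof.
move=> vw x [/box_interior_cat_pointl Iv /box_interior_cat_pointl Iw].
exact: interior_disj (fun fvw => vw (f_inj fvw)) _ (conj Iv Iw).
Qed.

Lemma adj_iff_meet_sides v w : v <> w ->
  (eH v w <->
   exists x, box (lo_sides v) (hi_sides v) x /\ box (lo_sides w) (hi_sides w) x).
Proof.
move=> vw; have fvw : f v <> f w := fun h => vw (f_inj h).
split=> [/(adj_sides vw) [/(adj_meet fvw) [y [Yv Yw]] S] | [x M]].
  exists (cat_point y (fun j => Rmax (side_lo (side v j)) (side_lo (side w j)))).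
  apply/meet_sides; split.
    by split=> j; rewrite cat_point_lshift; [apply: Yv | apply: Yw].
  by move=> j; rewrite cat_point_rshift; have := sides_meet_lt (S j); lra.
apply/(adj_sides vw); split; last exact: meet_sides_not_opposite M.
apply/(adj_meet fvw); have /meet_sides [Hx _] := M.
by exists (fun j => x (lshift k j)).
Qed.

Lemma meet_sides_orth v w : v <> w ->
  (exists x, box (lo_sides v) (hi_sides v) x /\ box (lo_sides w) (hi_sides w) x) ->
  exists (c : R) (l' u' : point (d + k)),
    (forall i, val i <> 0%N -> (l' i < u' i)%R) /\
    (forall x, (box (lo_sides v) (hi_sides v) x /\ box (lo_sides w) (hi_sides w) x) <->
               orth_e1_box c l' u' x).
Proof.
move=> vw [x M]; have fvw : f v <> f w := fun h => vw (f_inj h).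
have S := meet_sides_not_opposite M; have /meet_sides [Hx _] := M.
have [c [l' [u' [lt_lu' meet_iff]]]] := meet_orth fvw (ex_intro _ _ Hx).
exists c, (cat_point l' (fun j => Rmax (side_lo (side v j)) (side_lo (side w j)))),
  (cat_point u' (fun j => Rmin (side_hi (side v j)) (side_hi (side w j)))); split.
  move=> i; case: (split_ordP i) => j -> Hj; rewrite ?cat_point_lshift ?cat_point_rshift.
    exact: lt_lu' Hj.
  exact: sides_meet_lt (S j).
move=> z; split=> [/meet_sides [/meet_iff Oz Sz] | ].
  exact/(orth_e1_box_cat_point d_gt0).
by move=> /(orth_e1_box_cat_point d_gt0) [/meet_iff Mz Sz]; apply/meet_sides.
Qed.

End AddSides.

Lemma dCBU_add_sides (T U : finType) (e : rel T) (eH : rel U) (f : U -> T) d k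
    (side : U -> 'I_k -> option bool) :
  injective f -> dCBU e d ->
  (forall v w, v <> w ->
     eH v w <-> e (f v) (f w) /\ forall j, ~~ opposite_sides (side v j) (side w j)) ->
  dCBU eH (d + k).
Proof.
move=> f_inj [d_gt0 [l [u [lt_lu [disj [adj orth]]]]]] adj_sides.
split; first exact: leq_trans d_gt0 (leq_addr k d).
exists (lo_sides f side l), (hi_sides f side u); split; last split; last split.
- exact: lo_sides_lt_hi.
- exact: interior_sides_disj.
- exact (adj_iff_meet_sides f_inj adj adj_sides).
- exact: meet_sides_orth.
Qed.

Definition nonedge_side (U : finType) (eH : rel U) (pq : U * U) (v : U) : option bool :=
  if eH pq.1 pq.2 then None
  else if v == pq.1 then Some true else if v == pq.2 then Some false else None.

Lemma adj_iff_nonedge_sides (U : finType) (eH : rel U) v w :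
  symmetric eH -> v <> w ->
  eH v w <-> forall pq, ~~ opposite_sides (nonedge_side eH pq v) (nonedge_side eH pq w).
Proof.
move=> eH_sym vw; split=> [Evw [p q] | H]; rewrite /nonedge_side /=.
- case: ifP => // nE.
  case: (v =P p) => [vp|_]; case: (w =P p) => [wp|_]; first by case: vw; rewrite vp wp.
  + by case: (w =P q) => // wq; rewrite -vp -wq Evw in nE.
  + by case: (v =P q) => // vq; rewrite -vq -wp eH_sym Evw in nE.
  + by case: (v == q); case: (w == q).
- apply/negPn/negP => nE; have := H (v, w); rewrite /nonedge_side /= (negbTE nE) eqxx.
  by case: (w =P v) => [wv|_]; [case: vw | rewrite eqxx].
Qed.

Lemma dCBU_subgraph (T U : finType) (e : rel T) (eH : rel U) (f : U -> T) d :
  symmetric eH -> injective f -> (forall v w, eH v w -> e (f v) (f w)) ->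
  dCBU e d -> dCBU eH (d + #|{: U * U}|).
Proof.
move=> eH_sym f_inj f_hom Hd.
apply: (dCBU_add_sides (side := fun v j => nonedge_side eH (enum_val j) v) f_inj Hd).
move=> v w vw; split=> [Evw | [_ H]].
  by split=> [|j]; [apply: f_hom | apply: (adj_iff_nonedge_sides eH_sym vw).1].
by apply/(adj_iff_nonedge_sides eH_sym vw) => pq; rewrite -(enum_rankK pq).
Qed.

Definition biclique_side (T : finType) (A B : {set T}) (v : T) : option bool :=
  if v \in A then Some true else if v \in B then Some false else None.

Lemma opposite_biclique_sides (T : finType) (A B : {set T}) v w :
  [disjoint A & B] ->
  opposite_sides (biclique_side A B v) (biclique_side A B w) =
  ((v \in A) && (w \in B)) || ((v \in B) && (w \in A)).
Proof.
move=> AB; rewrite /biclique_side.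
case vA: (v \in A); first rewrite (disjointFr AB vA);
  case wA: (w \in A); rewrite ?(disjointFr AB wA) //=.
all: by case: (v \in B); case: (w \in B).
Qed.

Lemma dCBU_remove_biclique (T : finType) (e : rel T) (A B : {set T}) d :
  [disjoint A & B] -> dCBU e d -> dCBU (remove_biclique e A B) d.+1.
Proof.
move=> AB Hd; rewrite -addn1.
apply: (dCBU_add_sides (side := fun v (_ : 'I_1) => biclique_side A B v) (@inj_id T) Hd).
move=> v w _; rewrite /remove_biclique -opposite_biclique_sides //.
by split=> [/andP [] | [-> /(_ ord0)]].
Qed.

Theorem mainTheorem9 :
  (* subgraphs (H embedded in G by an injective vertex map preserving edges) *)
  (forall (T : finType) (e : rel T) (U : finType) (eH : rel U) (f : U -> T),
      simple_graph e -> simple_graph eH ->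
      injective f ->
      (forall x y, eH x y -> e (f x) (f y)) ->
      CBU e -> CBU eH) /\
  (* the precise version *)
  (forall (T : finType) (e : rel T) (A B : {set T}) (d : nat),
      simple_graph e ->
      (0 < #|A|)%N -> (0 < #|B|)%N -> [disjoint A & B] ->
      dCBU e d -> dCBU (remove_biclique e A B) d.+1).
Proof.
split.
- move=> T e U eH f _ [eH_sym _] f_inj f_hom [d Hd].
  by exists (d + #|{: U * U}|); apply: (dCBU_subgraph eH_sym f_inj f_hom Hd).
- by move=> T e A B d _ _ _ AB; apply: dCBU_remove_biclique.
Qed.
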